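(* Let $\mathcal K$ be an anonymous $s$-consensus and let $d^N$ be a votewise distance whose seminorm family $(N_n)$ is symmetric and homogeneous. If $(\mathcal K,d^N)$ satisfies the votewise minimizer property, then $(\mathcal K,d^N)$ satisfies the compatible minimizer property with respect to the homogeneity relation $\sim_H$: $d^N(E,\mathcal K_r)=d^N(E',\mathcal K_r)$ for all $r$ whenever $E\sim_H E'$.
   Context: Elections: $E=(C,V,\pi)$ with $C$ a finite subset of a countably infinite set $C^*$, $V$ a finite nonempty subset of a countably infinite set $V^*$, $\pi:V\to L(C)$ ($L(C)$ = strict linear orders of $C$, $L_s(C)$ = strict linear orders of $s$ distinct elements of $C$). Anonymity relation $\sim_A$: same candidate set and some bijection $\varphi:V\to V'$ with $\pi'\circ\varphi=\pi$. Homogeneity relation $\sim_H$: same candidate set $C$ and $|\pi^{-1}(\rho)|/|V|=|\pi'^{-1}(\rho)|/|V'|$ for all $\rho\in L(C)$. An $s$-consensus is a map $\mathcal K$ from $D(\mathcal K)\subseteq\mathcal E$ to $L_s(C^* )$, $\mathcal K_r=\mathcal K^{-1}(r)$; it is anonymous if $D(\mathcal K)$ is a union of $\sim_A$-classes and $\mathcal K$ is constant on them. Votewise distance: fix an enumeration of $V^*$, for each finite $C$ a map $d_C:L(C)\times L(C)\to[0,\infty)$ with $d_C(\rho,\rho)=0$ and the triangle inequality, and seminorms $N_n$ on $\mathbb R^n$; for $E=(C,V,\pi),E'=(C,V,\pi')$, $V=\{v_1<\dots<v_n\}$, $d^N(E,E')=N_n(d_C(\pi(v_1),\pi'(v_1)),\dots,d_C(\pi(v_n),\pi'(v_n)))$,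 and $d^N(E,E')=\infty$ if candidate sets or voter sets differ. The family is symmetric if each $N_n$ is invariant under permuting coordinates, and homogeneous if $N_{kn}(x^{(k)})=N_n(x)$ for all $x\in\mathbb R^n$, $k\ge1$, where $x^{(k)}$ is the concatenation of $k$ copies of $x$. $d(E,A)=\inf_{F\in A}d(E,F)$. Votewise minimizer property (VMP): for each finite $C$ there is a function $\delta_C:L(C)\times L_s(C)\to[0,\infty)$ such that for every $E=(C,V,\pi)$ and every $r\in L_s(C)$ there exists $\pi^*:V\to L(C)$ with $(C,V,\pi^* )\in\mathcal K_r$, $d^N(E,(C,V,\pi^* ))=d^N(E,\mathcal K_r)$, and $d_C(\pi(v),\pi^*(v))=\delta_C(\pi(v),r)$ for every $v\in V$. *)

From Stdlib Require Import Reals List Sorting.Sorted Permutation Arith ClassicalEpsilon.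
Import ListNotations.
Open Scope R_scope.

(** * Elections
   Cstar = Vstar = nat.  A finite candidate set C is represented canonically by
   the strictly increasing list of its elements; likewise the voter set V,
   whose increasing order is the fixed enumeration of Vstar.  A strict linear
   order of C is represented by a ranking list (top candidate first)
   containing each element of C exactly once.  The profile pi is the list of
   ballots of the voters, in increasing voter order. *)

Record election := mkElection {
  cands  : list nat;
  voters : list nat;
  prof   : list (list nat) }.

Definition is_cand_set (C : list nat) : Prop := StronglySorted lt C.

Definition is_ranking (C rho : list nat) : Prop :=
  NoDup rho /\ (forall x, In x rho <-> In x C).

Definition is_sranking (s : nat) (r : list nat) : Prop :=
  NoDup r /\ length r = s.

Definition is_sranking_of (s : nat) (C r : list nat) : Prop :=
  is_sranking s r /\ incl r C.

Definition valid (E : election) : Prop :=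
  is_cand_set (cands E) /\ StronglySorted lt (voters E) /\ voters E <> [] /\
  length (prof E) = length (voters E) /\ Forall (is_ranking (cands E)) (prof E).

Fixpoint ballot_of (vs : list nat) (ps : list (list nat)) (v : nat) : list nat :=
  match vs, ps with
  | v' :: vs', p :: ps' => if Nat.eqb v v' then p else ballot_of vs' ps' v
  | _, _ => []
  end.
Definition ballot (E : election) (v : nat) : list nat := ballot_of (voters E) (prof E) v.

Definition simA (E E' : election) : Prop :=
  cands E = cands E' /\
  exists phi : nat -> nat,
    (forall v, In v (voters E) -> In (phi v) (voters E')) /\
    (forall v w, In v (voters E) -> In w (voters E) -> phi v = phi w -> v = w) /\
    (forall w, In w (voters E') -> exists v, In v (voters E) /\ phi v = w) /\
    (forall v, In v (voters E) -> ballot E' (phi v) = ballot E v).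

Definition nvotes (E : election) (rho : list nat) : nat :=
  count_occ (list_eq_dec Nat.eq_dec) (prof E) rho.

Definition simH (E E' : election) : Prop :=
  cands E = cands E' /\
  forall rho, is_ranking (cands E) rho ->
    INR (nvotes E rho) / INR (length (voters E)) =
    INR (nvotes E' rho) / INR (length (voters E')).

(** * s-consensus: a partial map from \mathcal E to L_s(Cstar) (None = outside D(K)) *)
Definition consensus := election -> option (list nat).

Definition is_sconsensus (s : nat) (K : consensus) : Prop :=
  forall E r, K E = Some r -> valid E /\ is_sranking s r.

Definition anonymous (K : consensus) : Prop :=
  forall E E', valid E -> valid E' -> simA E E' -> K E = K E'.

Inductive ER := Fin (x : R) | PInf | MInf.

Lemma ER_inf_aux (F : R -> Prop) : (exists x, F x) -> exists y, F (- y).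
Proof. intros [x Hx]; exists (- x); rewrite Ropp_involutive; exact Hx. Qed.

Definition ER_inf (S : ER -> Prop) : ER :=
  let F := fun x : R => S (Fin x) in
  match excluded_middle_informative (S MInf) with
  | left _ => MInf
  | right _ =>
    match excluded_middle_informative (exists x, F x) with
    | right _ => PInf
    | left ne =>
      match excluded_middle_informative (bound (fun y => F (- y))) with
      | left b => Fin (- proj1_sig (completeness _ b (ER_inf_aux F ne)))
      | right _ => MInf
      end
    end
  end.

Definition is_ranking_metric (dC : list nat -> list nat -> list nat -> R) : Prop :=
  forall C, is_cand_set C ->
    (forall rho sg, is_ranking C rho -> is_ranking C sg -> 0 <= dC C rho sg) /\
    (forall rho, is_ranking C rho -> dC C rho rho = 0) /\
    (forall rho sg tau, is_ranking C rho -> is_ranking C sg -> is_ranking C tau ->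
       dC C rho tau <= dC C rho sg + dC C sg tau).

(** vectors of R^n are lists of reals of length n *)
Definition vadd (x y : list R) : list R := map (fun p => fst p + snd p) (combine x y).
Definition vscale (a : R) (x : list R) : list R := map (fun t => a * t) x.

Definition is_seminorm_family (N : nat -> list R -> R) : Prop :=
  forall n,
    (forall x y, length x = n -> length y = n -> N n (vadd x y) <= N n x + N n y) /\
    (forall a x, length x = n -> N n (vscale a x) = Rabs a * N n x).

Definition symmetric_family (N : nat -> list R -> R) : Prop :=
  forall n x y, length x = n -> Permutation x y -> N n x = N n y.

Definition homogeneous_family (N : nat -> list R -> R) : Prop :=
  forall n k x, length x = n -> (1 <= k)%nat -> N (k * n)%nat (concat (repeat x k)) = N n x.

Definition list_eqb (a b : list nat) : bool :=
  if list_eq_dec Nat.eq_dec a b then true else false.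

Definition dN (dC : list nat -> list nat -> list nat -> R) (N : nat -> list R -> R)
  (E E' : election) : ER :=
  if andb (list_eqb (cands E) (cands E')) (list_eqb (voters E) (voters E')) then
    Fin (N (length (voters E))
           (map (fun p => dC (cands E) (fst p) (snd p)) (combine (prof E) (prof E'))))
  else PInf.

Definition dN_to (dC : list nat -> list nat -> list nat -> R) (N : nat -> list R -> R)
  (K : consensus) (E : election) (r : list nat) : ER :=
  ER_inf (fun x => exists F, K F = Some r /\ dN dC N E F = x).

Definition VMP (s : nat) (K : consensus) (dC : list nat -> list nat -> list nat -> R)
  (N : nat -> list R -> R) : Prop :=
  forall C, is_cand_set C ->
  exists delta : list nat -> list nat -> R,
    (forall rho r, is_ranking C rho -> is_sranking_of s C r -> 0 <= delta rho r) /\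
    forall E r, valid E -> cands E = C -> is_sranking_of s C r ->
      exists pstar : list (list nat),
        let F := mkElection C (voters E) pstar in
        K F = Some r /\
        dN dC N E F = dN_to dC N K E r /\
        Forall2 (fun rho rho' => dC C rho rho' = delta rho r) (prof E) pstar.

Definition CMP_H (s : nat) (K : consensus) (dC : list nat -> list nat -> list nat -> R)
  (N : nat -> list R -> R) : Prop :=
  forall E E', valid E -> valid E' -> simH E E' ->
    forall r, is_sranking_of s (cands E) r -> dN_to dC N K E r = dN_to dC N K E' r.

(** By the votewise minimizer property, [d^N(E, K_r)] is the seminorm of the
    vector [(delta(pi(v), r))_v], which depends on [E] only through the
    multiset of its ballots.  If [E] has [n] voters and [E'] has [n'], then
    [E ~H E'] says exactly that the profile of [E] repeated [n'] times is a
    permutation of the profile of [E'] repeated [n] times; homogeneity and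
    symmetry of [N] then give equal seminorms. *)

From Stdlib Require Import Reals List Permutation Lia Lra.
Import ListNotations.

Lemma list_eqb_refl (a : list nat) : list_eqb a a = true.
Proof. unfold list_eqb; destruct (list_eq_dec Nat.eq_dec a a); congruence. Qed.

Lemma map_combine_Forall2 {A B C : Type} (g : A -> B -> C) (f : A -> C)
  (l : list A) (p : list B) :
  Forall2 (fun a b => g a b = f a) l p ->
  map (fun q => g (fst q) (snd q)) (combine l p) = map f l.
Proof. induction 1 as [|a b l p Hab _ IH]; simpl; congruence. Qed.

Lemma length_concat_repeat {A : Type} (l : list A) (k : nat) :
  length (concat (repeat l k)) = (k * length l)%nat.
Proof. induction k as [|k IH]; simpl; [reflexivity|]. rewrite length_app, IH; reflexivity. Qed.

Lemma concat_repeat_map {A B : Type} (f : A -> B) (l : list A) (k : nat) :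
  concat (repeat (map f l) k) = map f (concat (repeat l k)).
Proof. induction k as [|k IH]; simpl; [reflexivity|]. rewrite map_app, IH; reflexivity. Qed.

Lemma count_occ_concat_repeat {A : Type} (eq_dec : forall x y : A, {x = y} + {x <> y})
  (l : list A) (k : nat) (a : A) :
  count_occ eq_dec (concat (repeat l k)) a = (k * count_occ eq_dec l a)%nat.
Proof. induction k as [|k IH]; simpl; [reflexivity|]. rewrite count_occ_app, IH; lia. Qed.

Lemma INR_div_eq_cross (a b n m : nat) : (0 < n)%nat -> (0 < m)%nat ->
  INR a / INR n = INR b / INR m -> (m * a = n * b)%nat.
Proof.
  intros Hn Hm Hab; apply lt_0_INR in Hn; apply lt_0_INR in Hm.
  apply INR_eq; rewrite !mult_INR.
  replace (INR m * INR a) with (INR n * INR m * (INR a / INR n)) by (field; lra).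
  rewrite Hab; field; lra.
Qed.

Lemma symmetric_homogeneous_replicate (N : nat -> list R -> R) :
  symmetric_family N -> homogeneous_family N ->
  forall (x y : list R) (n m : nat), length x = n -> length y = m ->
  (1 <= n)%nat -> (1 <= m)%nat ->
  Permutation (concat (repeat x m)) (concat (repeat y n)) -> N n x = N m y.
Proof.
  intros Hsym Hhom x y n m Hx Hy Hn Hm Hperm.
  rewrite <- (Hhom n m x Hx Hm), <- (Hhom m n y Hy Hn), Nat.mul_comm.
  apply (Hsym (n * m)%nat); [| exact Hperm].
  rewrite length_concat_repeat, Hx; apply Nat.mul_comm.
Qed.

Lemma voters_length_pos (E : election) : valid E -> (1 <= length (voters E))%nat.
Proof. intros (_ & _ & Hne & _). destruct (voters E); [congruence | simpl; lia]. Qed.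

Lemma simH_count_occ_cross (E E' : election) : valid E -> valid E' -> simH E E' ->
  forall a, (length (voters E') * count_occ (list_eq_dec Nat.eq_dec) (prof E) a =
             length (voters E) * count_occ (list_eq_dec Nat.eq_dec) (prof E') a)%nat.
Proof.
  intros HE HE' [Hc Hh] a.
  pose proof (voters_length_pos E HE); pose proof (voters_length_pos E' HE').
  destruct HE as (_ & _ & _ & _ & Hrk), HE' as (_ & _ & _ & _ & Hrk').
  destruct (In_dec (list_eq_dec Nat.eq_dec) a (prof E ++ prof E')) as [Ha | Ha].
  - apply INR_div_eq_cross; try lia.
    apply Hh; apply in_app_or in Ha as [Ha | Ha].
    + exact (proj1 (Forall_forall _ _) Hrk a Ha).
    + rewrite Hc; exact (proj1 (Forall_forall _ _) Hrk' a Ha).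
  - rewrite !(proj1 (count_occ_not_In _ _ a)); [lia | |];
      intro; apply Ha, in_or_app; auto.
Qed.

Lemma simH_replicated_profiles_perm (E E' : election) :
  valid E -> valid E' -> simH E E' ->
  Permutation (concat (repeat (prof E) (length (voters E'))))
              (concat (repeat (prof E') (length (voters E)))).
Proof.
  intros HE HE' HH.
  apply (Permutation_count_occ (list_eq_dec Nat.eq_dec)); intro a.
  rewrite !count_occ_concat_repeat; apply simH_count_occ_cross; assumption.
Qed.

Lemma VMP_dN_to_votewise (s : nat) (K : consensus)
  (dC : list nat -> list nat -> list nat -> R) (N : nat -> list R -> R) (C : list nat) :
  VMP s K dC N -> is_cand_set C ->
  exists delta : list nat -> list nat -> R,
    forall E r, valid E -> cands E = C -> is_sranking_of s C r ->
      dN_to dC N K E r = Fin (N (length (voters E)) (map (fun rho => delta rho r) (prof E))).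
Proof.
  intros Hvmp HC; destruct (Hvmp C HC) as [delta [_ Hdelta]]; exists delta.
  intros E r HE HEC Hr.
  destruct (Hdelta E r HE HEC Hr) as [pstar [_ [Hmin Hvote]]].
  rewrite <- Hmin; unfold dN; simpl; rewrite HEC, !list_eqb_refl; simpl.
  rewrite (map_combine_Forall2 (dC C) (fun rho => delta rho r) _ _ Hvote).
  reflexivity.
Qed.

Theorem proposition6p7 (s : nat) (K : consensus)
  (dC : list nat -> list nat -> list nat -> R) (N : nat -> list R -> R) :
  is_sconsensus s K -> anonymous K ->
  is_ranking_metric dC -> is_seminorm_family N ->
  symmetric_family N -> homogeneous_family N ->
  VMP s K dC N -> CMP_H s K dC N.
Proof.
  intros _ _ _ _ Hsym Hhom Hvmp E E' HE HE' HH r Hr.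
  pose proof HE as (HC & _ & _ & Hlen & _).
  pose proof HE' as (_ & _ & _ & Hlen' & _).
  destruct (VMP_dN_to_votewise s K dC N (cands E) Hvmp HC) as [delta Hdelta].
  rewrite (Hdelta E r HE eq_refl Hr), (Hdelta E' r HE' (eq_sym (proj1 HH)) Hr).
  f_equal; apply (symmetric_homogeneous_replicate N Hsym Hhom).
  - rewrite length_map; exact Hlen.
  - rewrite length_map; exact Hlen'.
  - exact (voters_length_pos E HE).
  - exact (voters_length_pos E' HE').
  - rewrite !concat_repeat_map; apply Permutation_map.
    exact (simH_replicated_profiles_perm E E' HE HE' HH).
Qed.
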